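(* The constant allocation $s\equiv\tfrac12$ maximizes $W_0(s)=\int_0^{\bar\theta}\frac{1-F(\theta)}{f(\theta)}s(\theta)\,dF(\theta)$ over $\mathcal S(0)$ if and only if $$\int_0^\theta\Big(\frac{1-F(x)}{f(x)}-\mathbb E[\theta]\Big)dF(x)\ \ge\ 0\qquad\text{for all }\theta\in[0,\bar\theta],$$ where $\mathbb E[\theta]=\int_0^{\bar\theta}x\,dF(x)$.
   Context: Let $0<\bar\theta<\infty$, $\Theta=[0,\bar\theta]$, $F$ a cdf on $\Theta$ with continuous, strictly positive density $f$, $dF=f\,d\theta$. For bounded measurable $a,b$ on $\Theta$, write $b\in\mathrm{MPS}(a)$ if $\int_x^{\bar\theta}b\,dF\le\int_x^{\bar\theta}a\,dF$ for all $x\in\Theta$, with equality at $x=0$. $\mathcal S(0)$ is the set of nondecreasing $s:\Theta\to[0,1]$ with $s\in\mathrm{MPS}(F)$ (feasible interim statuses when exclusion is impossible). $s\equiv\frac12$ corresponds to offering a single (free) level. *)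

From Stdlib Require Import Reals.
From Coquelicot Require Import Coquelicot.
Open Scope R_scope.

Definition continuous_on_Icc (f : R -> R) (a b : R) : Prop :=
  forall x, a <= x <= b -> forall eps, 0 < eps ->
    exists delta, 0 < delta /\
      forall y, a <= y <= b -> Rabs (y - x) < delta -> Rabs (f y - f x) < eps.

Definition cdf_with_density (tb : R) (F f : R -> R) : Prop :=
  continuous_on_Icc f 0 tb /\
  (forall x, 0 <= x <= tb -> 0 < f x) /\
  (forall x, 0 <= x <= tb -> F x = RInt f 0 x) /\
  F tb = 1.

Definition MPS (tb : R) (f : R -> R) (b a : R -> R) : Prop :=
  (forall x, 0 <= x <= tb ->
     RInt (fun t => b t * f t) x tb <= RInt (fun t => a t * f t) x tb) /\
  RInt (fun t => b t * f t) 0 tb = RInt (fun t => a t * f t) 0 tb.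

Definition S0 (tb : R) (F f : R -> R) (s : R -> R) : Prop :=
  (forall x y, 0 <= x -> x <= y -> y <= tb -> s x <= s y) /\
  (forall x, 0 <= x <= tb -> 0 <= s x <= 1) /\
  MPS tb f s F.

Definition W0 (tb : R) (F f : R -> R) (s : R -> R) : R :=
  RInt (fun t => (1 - F t) / f t * s t * f t) 0 tb.

Definition maximizes_W0 (tb : R) (F f : R -> R) (s : R -> R) : Prop :=
  S0 tb F f s /\ forall s', S0 tb F f s' -> W0 tb F f s' <= W0 tb F f s.

Definition mean_theta (tb : R) (f : R -> R) : R :=
  RInt (fun x => x * f x) 0 tb.

(* Write [Psi theta] for the integral in the condition.  Since [E[theta] = RInt (1 - F)],
   [Psi tb = 0], and for every feasible [s] the mass constraint [RInt s dF = 1/2] gives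
   [W0 s - W0 (1/2) = RInt s * ((1 - F) / f - E[theta]) dF].
   Sufficiency: a nondecreasing nonnegative [s] is a uniform limit of nonnegative
   combinations of indicators of upper intervals [(m, tb]], each of which integrates the
   integrand against [dF] to [- Psi m <= 0]; so [W0 s <= W0 (1/2)].
   Necessity: for each [theta] the allocation equal to [F theta / 2] below [theta] and to
   [(1 + F theta) / 2] above it is feasible, and [W0] of it exceeds [W0 (1/2)] by exactly
   [- Psi theta / 2]. *)

From Stdlib Require Import Reals Lra Psatz Classical ClassicalEpsilon.
From Coquelicot Require Import Coquelicot.
Open Scope R_scope.

(* Equalities between [RInt]s are typed at the carrier of a Coquelicot module, which
   [ring], [field] and [lra] do not recognise as [R]. *)
Ltac real_eq := match goal with |- ?x = ?y => change (@eq R x y) end.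

Lemma RInt_plus_R (f g : R -> R) (a b : R) : ex_RInt f a b -> ex_RInt g a b ->
  RInt (fun x => f x + g x) a b = RInt f a b + RInt g a b.
Proof. exact (RInt_plus f g a b). Qed.

Lemma RInt_minus_R (f g : R -> R) (a b : R) : ex_RInt f a b -> ex_RInt g a b ->
  RInt (fun x => f x - g x) a b = RInt f a b - RInt g a b.
Proof. exact (RInt_minus f g a b). Qed.

Lemma RInt_scal_R (f : R -> R) (a b k : R) : ex_RInt f a b ->
  RInt (fun x => k * f x) a b = k * RInt f a b.
Proof. exact (RInt_scal f a b k). Qed.

Lemma RInt_const_R (a b c : R) : RInt (fun _ => c) a b = c * (b - a).
Proof. rewrite RInt_const. unfold scal; simpl; unfold mult; simpl. ring. Qed.

Lemma RInt_Chasles_R (f : R -> R) (a b c : R) : ex_RInt f a b -> ex_RInt f b c ->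
  RInt f a b + RInt f b c = RInt f a c.
Proof. exact (RInt_Chasles f a b c). Qed.

Lemma ex_RInt_plus_R (f g : R -> R) (a b : R) : ex_RInt f a b -> ex_RInt g a b ->
  ex_RInt (fun x => f x + g x) a b.
Proof. exact (ex_RInt_plus f g a b). Qed.

Lemma ex_RInt_scal_R (f : R -> R) (a b k : R) : ex_RInt f a b ->
  ex_RInt (fun x => k * f x) a b.
Proof. exact (ex_RInt_scal f a b k). Qed.

Lemma continuous_plus_R (u v : R -> R) (x : R) : continuous u x -> continuous v x ->
  continuous (fun t => u t + v t) x.
Proof. exact (continuous_plus u v x). Qed.

Lemma continuous_minus_R (u v : R -> R) (x : R) : continuous u x -> continuous v x ->
  continuous (fun t => u t - v t) x.
Proof. exact (continuous_minus u v x). Qed.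

Lemma continuous_mult_R (u v : R -> R) (x : R) : continuous u x -> continuous v x ->
  continuous (fun t => u t * v t) x.
Proof. exact (continuous_mult u v x). Qed.

Lemma RInt_derive_R (G g : R -> R) (a b : R) :
  (forall x, is_derive G x (g x)) -> (forall x, continuous g x) -> RInt g a b = G b - G a.
Proof.
  intros HG Hg. apply is_RInt_unique.
  exact (is_RInt_derive G g a b (fun x _ => HG x) (fun x _ => Hg x)).
Qed.

Lemma ex_RInt_continuous_R (g : R -> R) (a b : R) :
  (forall x, continuous g x) -> ex_RInt g a b.
Proof.
  intros Hg. apply (ex_RInt_continuous (V := R_CompleteNormedModule)). intros x _. apply Hg.
Qed.

Lemma ex_RInt_subinterval (g : R -> R) (a b c d : R) : a <= c -> c <= d -> d <= b ->
  ex_RInt g a b -> ex_RInt g c d.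
Proof.
  intros Hac Hcd Hdb Hg.
  apply (ex_RInt_Chasles_1 (V := R_CompleteNormedModule)) with b; [lra|].
  apply (ex_RInt_Chasles_2 (V := R_CompleteNormedModule)) with a; [lra|exact Hg].
Qed.

Lemma RInt_ext_in (u v : R -> R) (lo hi a b : R) : lo <= a <= hi -> lo <= b <= hi ->
  (forall t, lo <= t <= hi -> u t = v t) -> RInt u a b = RInt v a b.
Proof.
  intros Ha Hb H. apply RInt_ext. intros x Hx. apply H.
  unfold Rmin, Rmax in Hx. destruct Rle_dec; lra.
Qed.

Definition clamp (a b x : R) : R := Rmax a (Rmin b x).

Lemma clamp_in (a b x : R) : a <= b -> a <= clamp a b x <= b.
Proof. intros. unfold clamp, Rmax, Rmin. repeat destruct Rle_dec; lra. Qed.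

Lemma clamp_id (a b x : R) : a <= x <= b -> clamp a b x = x.
Proof. intros. unfold clamp, Rmax, Rmin. repeat destruct Rle_dec; lra. Qed.

Lemma clamp_below (a b x : R) : x <= a <= b -> clamp a b x = a.
Proof. intros. unfold clamp, Rmax, Rmin. repeat destruct Rle_dec; lra. Qed.

Lemma clamp_lipschitz (a b x y : R) : a <= b ->
  Rabs (clamp a b y - clamp a b x) <= Rabs (y - x).
Proof.
  intros. unfold clamp, Rmax, Rmin.
  repeat destruct Rle_dec; unfold Rabs; repeat destruct Rcase_abs; lra.
Qed.

Lemma continuous_on_Icc_clamp (g : R -> R) (a b x : R) : a <= b ->
  continuous_on_Icc g a b -> continuous (fun t => g (clamp a b t)) x.
Proof.
  intros Hab Hg. apply continuity_pt_filterlim. intros eps Heps.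
  destruct (Hg (clamp a b x) (clamp_in a b x Hab) eps Heps) as [d [Hd Hclose]].
  exists d. split; [exact Hd|]. intros y [_ Hy]. simpl in *. unfold R_dist in *.
  apply Hclose; [apply clamp_in; exact Hab|].
  eapply Rle_lt_trans; [apply clamp_lipschitz; exact Hab | exact Hy].
Qed.

Definition nondecreasing_on (s : R -> R) (a b : R) : Prop :=
  forall x y, a <= x -> x <= y -> y <= b -> s x <= s y.

Definition preserves_nonpos_tails (a b : R) (h : R -> R) : Prop :=
  forall g : R -> R, ex_RInt g a b ->
    ex_RInt (fun t => h t * g t) a b /\
    ((forall m, a <= m <= b -> RInt g m b <= 0) -> RInt (fun t => h t * g t) a b <= 0).

Lemma preserves_nonpos_tails_const (a b c : R) : a <= b -> 0 <= c ->
  preserves_nonpos_tails a b (fun _ => c).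
Proof.
  intros Hab Hc g Hg. split; [exact (ex_RInt_scal_R g a b c Hg)|].
  intros Htails. rewrite RInt_scal_R by exact Hg.
  specialize (Htails a (conj (Rle_refl a) Hab)). nra.
Qed.

Lemma preserves_nonpos_tails_plus (a b : R) (h k : R -> R) :
  preserves_nonpos_tails a b h -> preserves_nonpos_tails a b k ->
  preserves_nonpos_tails a b (fun t => h t + k t).
Proof.
  intros Hh Hk g Hg. destruct (Hh g Hg) as [Ihg Shg]. destruct (Hk g Hg) as [Ikg Skg].
  assert (Hsplit : forall t, (h t + k t) * g t = h t * g t + k t * g t) by (intros; ring).
  split.
  - eapply ex_RInt_ext; [intros t _; symmetry; apply Hsplit|].
    exact (ex_RInt_plus_R _ _ a b Ihg Ikg).
  - intros Htails. rewrite (RInt_ext _ (fun t => h t * g t + k t * g t))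
      by (intros t _; apply Hsplit).
    rewrite RInt_plus_R by assumption.
    pose proof (Shg Htails). pose proof (Skg Htails). lra.
Qed.

Lemma preserves_nonpos_tails_scal (a b c : R) (h : R -> R) : 0 <= c ->
  preserves_nonpos_tails a b h -> preserves_nonpos_tails a b (fun t => c * h t).
Proof.
  intros Hc Hh g Hg. destruct (Hh g Hg) as [Ihg Shg].
  assert (Hassoc : forall t, c * h t * g t = c * (h t * g t)) by (intros; ring).
  split.
  - eapply ex_RInt_ext; [intros t _; symmetry; apply Hassoc|].
    exact (ex_RInt_scal_R _ a b c Ihg).
  - intros Htails. rewrite (RInt_ext _ (fun t => c * (h t * g t))) by (intros t _; apply Hassoc).
    rewrite RInt_scal_R by exact Ihg. pose proof (Shg Htails). nra.
Qed.

Lemma nondecreasing_level_split (s : R -> R) (a b c : R) : a <= b -> nondecreasing_on s a b ->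
  exists m, a <= m <= b /\ (forall t, a < t < m -> s t < c) /\ (forall t, m < t < b -> c <= s t).
Proof.
  intros Hab Hs.
  set (E := fun t => (a <= t <= b /\ s t < c) \/ t = a).
  assert (HE_bound : bound E) by (exists b; intros t [[Ht _]|Ht]; lra).
  assert (HE_inhab : exists x, E x) by (exists a; right; reflexivity).
  destruct (completeness E HE_bound HE_inhab) as [m [Hub Hlub]].
  assert (Ham : a <= m) by (apply Hub; right; reflexivity).
  assert (Hmb : m <= b) by (apply Hlub; intros t [[Ht _]|Ht]; lra).
  exists m. split; [lra|split].
  - intros t Ht.
    assert (Hbeyond : exists e, E e /\ t < e).
    { apply NNPP. intros Hn. assert (m <= t); [|lra].
      apply Hlub. intros e Ee. apply Rnot_lt_le. intros Hlt. apply Hn. exists e; auto. }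
    destruct Hbeyond as [e [[[He Hse]|He] Hte]]; [|lra].
    apply Rle_lt_trans with (s e); [apply Hs|]; lra.
  - intros t Ht. apply Rnot_lt_le. intros Hlt.
    assert (t <= m) by (apply Hub; left; split; [lra|exact Hlt]). lra.
Qed.

Definition upper_indicator (s : R -> R) (c t : R) : R := if Rle_dec c (s t) then 1 else 0.

(* The superlevel set of a monotone [s] is an interval [(m, b]] up to the endpoint [m],
   so [upper_indicator s c * g] integrates to [RInt g m b]. *)
Lemma upper_indicator_preserves_nonpos_tails (s : R -> R) (a b c : R) :
  a <= b -> nondecreasing_on s a b -> preserves_nonpos_tails a b (upper_indicator s c).
Proof.
  intros Hab Hs. destruct (nondecreasing_level_split s a b c Hab Hs) as [m [Hm [Hbelow Habove]]].
  assert (Hzero : forall x g, Rmin a m < x < Rmax a m -> upper_indicator s c x * g x = 0).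
  { intros x g Hx. rewrite Rmin_left, Rmax_right in Hx by lra. unfold upper_indicator.
    destruct Rle_dec as [Hle|]; [specialize (Hbelow x Hx); lra | ring]. }
  assert (Hone : forall x (g : R -> R), Rmin m b < x < Rmax m b ->
            upper_indicator s c x * g x = g x).
  { intros x g Hx. rewrite Rmin_left, Rmax_right in Hx by lra. unfold upper_indicator.
    destruct Rle_dec as [|Hnle]; [ring | specialize (Habove x Hx); lra]. }
  intros g Hg.
  assert (Hgmb : ex_RInt g m b) by (apply ex_RInt_subinterval with a b; lra || exact Hg).
  assert (Ilow : ex_RInt (fun t => upper_indicator s c t * g t) a m).
  { apply (ex_RInt_ext (V := R_NormedModule)) with (fun _ => 0); [|apply ex_RInt_const].
    intros x Hx. symmetry. apply Hzero, Hx. }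
  assert (Ihigh : ex_RInt (fun t => upper_indicator s c t * g t) m b).
  { apply (ex_RInt_ext (V := R_NormedModule)) with g; [|exact Hgmb].
    intros x Hx. symmetry. apply Hone, Hx. }
  assert (Hval : RInt (fun t => upper_indicator s c t * g t) a b = RInt g m b).
  { rewrite <- (RInt_Chasles_R _ a m b Ilow Ihigh).
    rewrite (RInt_ext _ (fun _ => 0) a m) by (intros x Hx; apply Hzero, Hx).
    rewrite (RInt_ext _ g m b) by (intros x Hx; apply Hone, Hx).
    rewrite RInt_const_R, Rmult_0_l, Rplus_0_l. reflexivity. }
  split; [exact (ex_RInt_Chasles _ a m b Ilow Ihigh)|].
  intros Htails. rewrite Hval. exact (Htails m Hm).
Qed.

(* Peel off one layer [d * upper_indicator s d] and recurse on [max (s - d) 0]. *)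
Lemma nondecreasing_layer_approx (a b d : R) : a <= b -> 0 < d ->
  forall (n : nat) (s : R -> R), nondecreasing_on s a b ->
  (forall t, a <= t <= b -> 0 <= s t < INR (S n) * d) ->
  exists h, preserves_nonpos_tails a b h /\
    forall t, a <= t <= b -> 0 <= h t <= s t /\ s t < h t + d.
Proof.
  intros Hab Hd n. induction n as [|n IH]; intros s Hs Hbound.
  - exists (fun _ => 0). split; [exact (preserves_nonpos_tails_const a b 0 Hab (Rle_refl 0))|].
    intros t Ht. specialize (Hbound t Ht). simpl in Hbound. lra.
  - set (s' := fun t => Rmax (s t - d) 0).
    assert (Hs' : nondecreasing_on s' a b).
    { intros x y Hx Hxy Hy. unfold s'. pose proof (Hs x y Hx Hxy Hy).
      apply Rle_max_compat_r. lra. }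
    destruct (IH s' Hs') as [h' [Hh' Happrox']].
    { intros t Ht. specialize (Hbound t Ht). rewrite S_INR in Hbound. unfold s'.
      assert (0 < INR (S n) * d) by (apply Rmult_lt_0_compat; [apply lt_0_INR; lia|lra]).
      unfold Rmax. destruct Rle_dec; lra. }
    exists (fun t => h' t + d * upper_indicator s d t). split.
    + apply preserves_nonpos_tails_plus; [exact Hh'|].
      apply preserves_nonpos_tails_scal; [lra|].
      exact (upper_indicator_preserves_nonpos_tails s a b d Hab Hs).
    + intros t Ht. specialize (Happrox' t Ht). specialize (Hbound t Ht).
      unfold s', upper_indicator in *. destruct (Rle_dec d (s t)).
      * rewrite Rmax_left in Happrox' by lra. lra.
      * rewrite Rmax_right in Happrox' by lra. lra.
Qed.

Lemma nondecreasing_uniform_approx (a b d : R) (s : R -> R) :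
  a <= b -> 0 < d -> nondecreasing_on s a b -> 0 <= s a ->
  exists h, preserves_nonpos_tails a b h /\ forall t, a <= t <= b -> h t <= s t < h t + d.
Proof.
  intros Hab Hd Hs Hsa.
  destruct (INR_archimed d (s b) Hd) as [n Hn].
  destruct (nondecreasing_layer_approx a b d Hab Hd n s Hs) as [h [Hh Happrox]].
  { intros t Ht. pose proof (Hs a t (Rle_refl a) (proj1 Ht) (proj2 Ht)).
    pose proof (Hs t b (proj1 Ht) (proj2 Ht) (Rle_refl b)). rewrite S_INR. lra. }
  exists h. split; [exact Hh|]. intros t Ht. specialize (Happrox t Ht). lra.
Qed.

(* Coquelicot's [filterlim_RInt] asks for uniform convergence on all of [R]; outside
   [[a, b]] the approximants are replaced by the limit itself. *)
Lemma RInt_uniform_limit (a b : R) (u : nat -> R -> R) (v : R -> R) : a <= b ->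
  (forall k, ex_RInt (u k) a b) ->
  (forall eps : posreal, exists N, forall k t, (N <= k)%nat -> a <= t <= b ->
     Rabs (u k t - v t) < eps) ->
  ex_RInt v a b /\ is_lim_seq (fun k => RInt (u k) a b) (RInt v a b).
Proof.
  intros Hab Hu Hconv.
  set (w := fun k t => if Rle_dec a t then if Rle_dec t b then u k t else v t else v t).
  assert (Hw : forall k, RInt (w k) a b = RInt (u k) a b).
  { intros k. apply RInt_ext. intros x Hx. rewrite Rmin_left, Rmax_right in Hx by lra.
    unfold w. destruct Rle_dec; [|lra]. destruct Rle_dec; [reflexivity|lra]. }
  destruct (filterlim_RInt (V := R_CompleteNormedModule) w a b eventually _ v
              (fun k => RInt (w k) a b)) as [I [Hlim HI]].
  - intros k. apply (RInt_correct (V := R_CompleteNormedModule)).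
    apply (ex_RInt_ext (V := R_NormedModule)) with (u k); [|apply Hu].
    intros x Hx. rewrite Rmin_left, Rmax_right in Hx by lra.
    unfold w. destruct Rle_dec; [|lra]. destruct Rle_dec; [reflexivity|lra].
  - intros P [eps HP]. destruct (Hconv eps) as [N HN]. exists N. intros k Hk.
    apply HP. intros t. change (Rabs (w k t - v t) < eps).
    unfold w. destruct Rle_dec; [destruct Rle_dec|].
    2,3: rewrite Rminus_diag, Rabs_R0; apply cond_pos.
    apply HN; [exact Hk | split; assumption].
  - rewrite (is_RInt_unique v a b I HI).
    split; [exists I; exact HI|].
    eapply is_lim_seq_ext; [exact Hw | exact Hlim].
Qed.

Lemma eventually_inv_succ_lt (eps : R) : 0 < eps ->
  exists N, forall k, (N <= k)%nat -> / (INR k + 1) < eps.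
Proof.
  intros Heps. destruct (INR_archimed eps 1 Heps) as [N HN]. exists N. intros k Hk.
  assert (HNk : INR N <= INR k) by (apply le_INR; exact Hk).
  assert (0 < INR k + 1) by (pose proof (pos_INR k); lra).
  apply Rmult_lt_reg_l with (INR k + 1); [assumption|].
  rewrite Rinv_r by lra. nra.
Qed.

(* Bonnet's form of the second mean value theorem. [s] is a uniform limit of nonnegative
   combinations of upper indicators, for which the tail condition applies term by term. *)
Lemma nondecreasing_preserves_nonpos_tails (a b : R) (s : R -> R) :
  a <= b -> nondecreasing_on s a b -> 0 <= s a -> preserves_nonpos_tails a b s.
Proof.
  intros Hab Hs Hsa.
  assert (Happrox : forall k : nat, exists h, preserves_nonpos_tails a b h /\
            forall t, a <= t <= b -> h t <= s t < h t + / (INR k + 1)).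
  { intros k. apply nondecreasing_uniform_approx; try assumption.
    apply Rinv_0_lt_compat. pose proof (pos_INR k). lra. }
  destruct (choice _ Happrox) as [h Hh].
  intros g Hg. destruct (ex_RInt_ub g a b Hg) as [M HM].
  assert (Hgbound : forall t, a <= t <= b -> Rabs (g t) <= Rabs M + 1).
  { intros t Ht. specialize (HM t). rewrite Rmin_left, Rmax_right in HM by lra.
    specialize (HM Ht). change (Rabs (g t) <= M) in HM. pose proof (Rle_abs M). lra. }
  assert (Hconv : forall eps : posreal, exists N, forall k t, (N <= k)%nat -> a <= t <= b ->
            Rabs (h k t * g t - s t * g t) < eps).
  { intros eps. assert (HK : 0 < Rabs M + 1) by (pose proof (Rabs_pos M); lra).
    destruct (eventually_inv_succ_lt (eps / (Rabs M + 1))) as [N HN].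
    { apply Rdiv_lt_0_compat; [apply cond_pos|exact HK]. }
    exists N. intros k t Hk Ht. specialize (HN k Hk). destruct (Hh k) as [_ Hclose].
    specialize (Hclose t Ht). specialize (Hgbound t Ht).
    replace (h k t * g t - s t * g t) with ((s t - h k t) * - g t) by ring.
    rewrite Rabs_mult, Rabs_Ropp, Rabs_right by lra.
    apply Rle_lt_trans with (/ (INR k + 1) * (Rabs M + 1)).
    - apply Rmult_le_compat; [lra | apply Rabs_pos | lra | exact Hgbound].
    - apply Rmult_lt_reg_r with (/ (Rabs M + 1)); [apply Rinv_0_lt_compat, HK|].
      rewrite Rmult_assoc, Rinv_r, Rmult_1_r by lra. exact HN. }
  destruct (RInt_uniform_limit a b (fun k t => h k t * g t) (fun t => s t * g t) Hab
              (fun k => proj1 (proj1 (Hh k) g Hg)) Hconv) as [Hint Hlim].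
  split; [exact Hint|]. intros Htails.
  exact (is_lim_seq_le _ _ _ _ (fun k => proj2 (proj1 (Hh k) g Hg) Htails)
           Hlim (is_lim_seq_const 0)).
Qed.

Definition step_at (theta alpha beta t : R) : R := if Rlt_dec theta t then beta else alpha.

Lemma RInt_step_at_mult (theta alpha beta a b : R) (g : R -> R) : a <= b -> ex_RInt g a b ->
  RInt (fun t => step_at theta alpha beta t * g t) a b =
  alpha * RInt g a (clamp a b theta) + beta * RInt g (clamp a b theta) b.
Proof.
  intros Hab Hg. set (c := clamp a b theta).
  assert (Hc : a <= c <= b) by (apply clamp_in, Hab).
  assert (Hlow : forall t, Rmin a c < t < Rmax a c ->
            step_at theta alpha beta t * g t = alpha * g t).
  { intros t Ht. rewrite Rmin_left, Rmax_right in Ht by lra.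
    unfold step_at, c, clamp, Rmax, Rmin in *.
    destruct Rlt_dec; [|reflexivity]. repeat destruct Rle_dec; lra. }
  assert (Hhigh : forall t, Rmin c b < t < Rmax c b ->
            step_at theta alpha beta t * g t = beta * g t).
  { intros t Ht. rewrite Rmin_left, Rmax_right in Ht by lra.
    unfold step_at, c, clamp, Rmax, Rmin in *.
    destruct Rlt_dec; [reflexivity|]. repeat destruct Rle_dec; lra. }
  assert (Hgac : ex_RInt g a c) by (apply ex_RInt_subinterval with a b; lra || exact Hg).
  assert (Hgcb : ex_RInt g c b) by (apply ex_RInt_subinterval with a b; lra || exact Hg).
  rewrite <- (RInt_Chasles_R _ a c b).
  - rewrite (RInt_ext _ _ a c Hlow), (RInt_ext _ _ c b Hhigh), !RInt_scal_R by assumption.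
    reflexivity.
  - apply (ex_RInt_ext (V := R_NormedModule)) with (fun t => alpha * g t);
      [intros t Ht; symmetry; apply Hlow, Ht | apply ex_RInt_scal_R, Hgac].
  - apply (ex_RInt_ext (V := R_NormedModule)) with (fun t => beta * g t);
      [intros t Ht; symmetry; apply Hhigh, Ht | apply ex_RInt_scal_R, Hgcb].
Qed.

(* [f] is continuous on [[0, tb]] only; composing with [clamp] yields a density that is
   continuous on all of [R], whose primitive is differentiable everywhere and equals [F]
   on [[0, tb]]. *)
Definition clamped_density (tb : R) (f : R -> R) (x : R) : R := f (clamp 0 tb x).

Definition clamped_cdf (tb : R) (f : R -> R) (x : R) : R := RInt (clamped_density tb f) 0 x.

(* The integrand [((1 - F) / f - E[theta]) * f] of the condition. *)
Definition excess_density (tb : R) (f : R -> R) (t : R) : R :=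
  1 - clamped_cdf tb f t - mean_theta tb f * clamped_density tb f t.

Definition pooling_allocation (tb : R) (f : R -> R) (theta : R) : R -> R :=
  step_at theta (clamped_cdf tb f theta / 2) ((1 + clamped_cdf tb f theta) / 2).

Section Allocation.

Variables (tb : R) (F f : R -> R).
Hypothesis Htb : 0 < tb.
Hypothesis HF : cdf_with_density tb F f.

Local Notation fe := (clamped_density tb f).
Local Notation Fe := (clamped_cdf tb f).
Local Notation E := (mean_theta tb f).
Local Notation excess := (excess_density tb f).

Lemma fe_continuous (x : R) : continuous fe x.
Proof. apply continuous_on_Icc_clamp; [lra | apply HF]. Qed.

Lemma ex_RInt_fe (a b : R) : ex_RInt fe a b.
Proof. apply ex_RInt_continuous_R, fe_continuous. Qed.

Lemma fe_pos (x : R) : 0 < fe x.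
Proof. apply HF, clamp_in. lra. Qed.

Lemma fe_eq (x : R) : 0 <= x <= tb -> fe x = f x.
Proof. intros Hx. unfold clamped_density. rewrite clamp_id by exact Hx. reflexivity. Qed.

Lemma Fe_derive (x : R) : is_derive Fe x (fe x).
Proof.
  apply (is_derive_RInt (V := R_NormedModule) fe Fe 0 x); [|apply fe_continuous].
  apply filter_forall. intros y. apply (RInt_correct (V := R_CompleteNormedModule)).
  apply ex_RInt_fe.
Qed.

Lemma Fe_continuous (x : R) : continuous Fe x.
Proof. apply (ex_derive_continuous (V := R_NormedModule)). eexists. apply Fe_derive. Qed.

Lemma RInt_fe (a b : R) : RInt fe a b = Fe b - Fe a.
Proof. apply RInt_derive_R; [exact Fe_derive | exact fe_continuous]. Qed.

Lemma F_eq_Fe (x : R) : 0 <= x <= tb -> F x = Fe x.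
Proof.
  intros Hx. destruct HF as [_ [_ [HFint _]]]. rewrite HFint by exact Hx.
  apply (RInt_ext_in _ _ 0 tb); [lra | exact Hx |]. intros t Ht. symmetry. apply fe_eq, Ht.
Qed.

Lemma Fe_0 : Fe 0 = 0.
Proof. exact (RInt_point 0 fe). Qed.

Lemma Fe_tb : Fe tb = 1.
Proof. rewrite <- F_eq_Fe by lra. apply HF. Qed.

Lemma Fe_nondecreasing (x y : R) : x <= y -> Fe x <= Fe y.
Proof.
  intros Hxy. assert (0 <= RInt fe x y); [|rewrite RInt_fe in *; lra].
  apply RInt_ge_0; [exact Hxy | apply ex_RInt_fe |].
  intros t _. left. apply fe_pos.
Qed.

Lemma Fe_bounds (x : R) : 0 <= x <= tb -> 0 <= Fe x <= 1.
Proof.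
  intros Hx. rewrite <- Fe_0, <- Fe_tb. split; apply Fe_nondecreasing; apply Hx.
Qed.

Lemma RInt_mult_density (s : R -> R) (x y : R) : 0 <= x <= tb -> 0 <= y <= tb ->
  RInt (fun t => s t * f t) x y = RInt (fun t => s t * fe t) x y.
Proof.
  intros Hx Hy. apply (RInt_ext_in _ _ 0 tb); [exact Hx | exact Hy |].
  intros t Ht. rewrite fe_eq by exact Ht. reflexivity.
Qed.

Lemma RInt_const_density (c x y : R) : RInt (fun t => c * fe t) x y = c * (Fe y - Fe x).
Proof.
  rewrite RInt_scal_R by apply ex_RInt_fe. rewrite RInt_fe. reflexivity.
Qed.

Lemma RInt_cdf_density (x y : R) : 0 <= x <= tb -> 0 <= y <= tb ->
  RInt (fun t => F t * f t) x y = (Fe y ^ 2 - Fe x ^ 2) / 2.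
Proof.
  intros Hx Hy. rewrite RInt_mult_density by assumption.
  rewrite (RInt_ext_in _ (fun t => Fe t * fe t) 0 tb)
    by (try assumption; intros t Ht; rewrite F_eq_Fe by exact Ht; reflexivity).
  rewrite (RInt_derive_R (fun t => / 2 * (Fe t * Fe t))).
  - simpl. field.
  - intros t. replace (Fe t * fe t) with (/ 2 * (fe t * Fe t + Fe t * fe t)) by field.
    apply is_derive_scal, Derive.is_derive_mult; apply Fe_derive.
  - intros t. apply continuous_mult_R; [apply Fe_continuous | apply fe_continuous].
Qed.

Lemma one_minus_Fe_continuous (x : R) : continuous (fun t => 1 - Fe t) x.
Proof. apply continuous_minus_R; [apply continuous_const | apply Fe_continuous]. Qed.

Lemma ex_RInt_one_minus_Fe (a b : R) : ex_RInt (fun t => 1 - Fe t) a b.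
Proof. apply ex_RInt_continuous_R, one_minus_Fe_continuous. Qed.

(* Integration by parts: [E[theta] = tb - RInt F 0 tb]. *)
Lemma mean_eq_RInt_survival : E = RInt (fun t => 1 - Fe t) 0 tb.
Proof.
  assert (Hparts : RInt (fun t => Fe t + t * fe t) 0 tb = tb).
  { rewrite (RInt_derive_R (fun t => t * Fe t)).
    - rewrite Fe_tb, Fe_0. real_eq. ring.
    - intros t. replace (Fe t + t * fe t) with (1 * Fe t + t * fe t) by ring.
      apply Derive.is_derive_mult; [apply (is_derive_id (K := R_AbsRing)) | apply Fe_derive].
    - intros t. apply continuous_plus_R; [apply Fe_continuous|].
      apply continuous_mult_R; [apply continuous_id | apply fe_continuous]. }
  assert (Hmean : E = RInt (fun t => t * fe t) 0 tb) by (apply RInt_mult_density; lra).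
  assert (HFe_int : ex_RInt Fe 0 tb) by apply ex_RInt_continuous_R, Fe_continuous.
  assert (Htfe_int : ex_RInt (fun t => t * fe t) 0 tb).
  { apply ex_RInt_continuous_R. intros t.
    apply continuous_mult_R; [apply continuous_id | apply fe_continuous]. }
  rewrite RInt_plus_R in Hparts by assumption.
  rewrite RInt_minus_R, RInt_const_R by (try apply ex_RInt_const; exact HFe_int).
  lra.
Qed.

Lemma ex_RInt_excess (a b : R) : ex_RInt excess a b.
Proof.
  apply ex_RInt_continuous_R. intros x. apply continuous_minus_R; [apply one_minus_Fe_continuous|].
  apply continuous_mult_R; [apply continuous_const | apply fe_continuous].
Qed.

Lemma RInt_excess (a b : R) :
  RInt excess a b = RInt (fun t => 1 - Fe t) a b - E * (Fe b - Fe a).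
Proof.
  unfold excess_density. rewrite RInt_minus_R, RInt_const_density.
  - reflexivity.
  - apply ex_RInt_one_minus_Fe.
  - apply ex_RInt_continuous_R. intros t.
    apply continuous_mult_R; [apply continuous_const | apply fe_continuous].
Qed.

Lemma RInt_excess_total : RInt excess 0 tb = 0.
Proof. rewrite RInt_excess, <- mean_eq_RInt_survival, Fe_tb, Fe_0. real_eq. ring. Qed.

Lemma condition_integrand_eq (theta : R) : 0 <= theta <= tb ->
  RInt (fun x => ((1 - F x) / f x - E) * f x) 0 theta = RInt excess 0 theta.
Proof.
  intros Htheta. apply (RInt_ext_in _ _ 0 tb); [lra | exact Htheta |].
  intros t Ht. unfold excess_density. rewrite F_eq_Fe, <- fe_eq by exact Ht.
  field. apply Rgt_not_eq, fe_pos.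
Qed.

Lemma W0_eq (s : R -> R) : W0 tb F f s = RInt (fun t => s t * (1 - Fe t)) 0 tb.
Proof.
  apply (RInt_ext_in _ _ 0 tb); [lra | lra |]. intros t Ht.
  rewrite F_eq_Fe, <- fe_eq by exact Ht. field. apply Rgt_not_eq, fe_pos.
Qed.

Lemma RInt_half_density (x : R) : 0 <= x <= tb ->
  RInt (fun t => 1 / 2 * f t) x tb = (1 - Fe x) / 2.
Proof.
  intros Hx. rewrite (RInt_mult_density (fun _ => 1 / 2)) by lra.
  rewrite RInt_const_density, Fe_tb. real_eq. field.
Qed.

Lemma half_in_S0 : S0 tb F f (fun _ => 1 / 2).
Proof.
  split; [intros; lra | split; [intros; lra | split]].
  - intros x Hx. rewrite RInt_half_density, RInt_cdf_density, Fe_tb by lra.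
    pose proof (Fe_bounds x Hx). nra.
  - rewrite RInt_half_density, RInt_cdf_density, Fe_tb, Fe_0 by lra. real_eq; field.
Qed.

Lemma W0_half : W0 tb F f (fun _ => 1 / 2) = E / 2.
Proof.
  rewrite W0_eq, RInt_scal_R, <- mean_eq_RInt_survival by apply ex_RInt_one_minus_Fe.
  field.
Qed.

Lemma RInt_pooling_allocation_density (theta x : R) : 0 <= x <= tb ->
  RInt (fun t => pooling_allocation tb f theta t * f t) x tb =
  Fe theta / 2 * (Fe (clamp x tb theta) - Fe x) + (1 + Fe theta) / 2 * (1 - Fe (clamp x tb theta)).
Proof.
  intros Hx. rewrite RInt_mult_density by lra. unfold pooling_allocation.
  rewrite RInt_step_at_mult, !RInt_fe, Fe_tb by (try apply ex_RInt_fe; lra).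
  reflexivity.
Qed.

Lemma pooling_allocation_in_S0 (theta : R) : 0 <= theta <= tb ->
  S0 tb F f (pooling_allocation tb f theta).
Proof.
  intros Htheta. pose proof (Fe_bounds theta Htheta) as Hp.
  split; [|split; [|split]].
  - intros x y _ Hxy _. unfold pooling_allocation, step_at.
    destruct (Rlt_dec theta x), (Rlt_dec theta y); lra.
  - intros x _. unfold pooling_allocation, step_at. destruct Rlt_dec; lra.
  - intros x Hx. rewrite RInt_pooling_allocation_density, RInt_cdf_density, Fe_tb by lra.
    pose proof (Fe_bounds x Hx). destruct (Rle_dec x theta).
    + rewrite clamp_id by lra. pose proof (Fe_nondecreasing x theta ltac:(lra)). nra.
    + rewrite clamp_below by lra. pose proof (Fe_nondecreasing theta x ltac:(lra)). nra.
  - rewrite RInt_pooling_allocation_density, RInt_cdf_density, clamp_id, Fe_tb, Fe_0 by lra.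
    real_eq. field.
Qed.

Lemma W0_pooling_allocation (theta : R) : 0 <= theta <= tb ->
  W0 tb F f (pooling_allocation tb f theta) =
  Fe theta / 2 * RInt (fun t => 1 - Fe t) 0 theta +
  (1 + Fe theta) / 2 * RInt (fun t => 1 - Fe t) theta tb.
Proof.
  intros Htheta. rewrite W0_eq. unfold pooling_allocation.
  rewrite RInt_step_at_mult, clamp_id by (try apply ex_RInt_one_minus_Fe; lra).
  reflexivity.
Qed.

Lemma half_optimal_implies_condition (theta : R) : 0 <= theta <= tb ->
  (forall s, S0 tb F f s -> W0 tb F f s <= W0 tb F f (fun _ => 1 / 2)) ->
  0 <= RInt excess 0 theta.
Proof.
  intros Htheta Hopt. pose proof (Fe_bounds theta Htheta).
  pose proof (Hopt _ (pooling_allocation_in_S0 theta Htheta)) as Hle.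
  rewrite W0_pooling_allocation, W0_half in Hle by exact Htheta.
  assert (Hsplit : RInt (fun t => 1 - Fe t) 0 theta + RInt (fun t => 1 - Fe t) theta tb = E).
  { rewrite mean_eq_RInt_survival. apply RInt_Chasles_R; apply ex_RInt_one_minus_Fe. }
  rewrite RInt_excess, Fe_0. nra.
Qed.

Lemma condition_implies_half_optimal (s : R -> R) :
  (forall theta, 0 <= theta <= tb -> 0 <= RInt excess 0 theta) ->
  S0 tb F f s -> W0 tb F f s <= W0 tb F f (fun _ => 1 / 2).
Proof.
  intros Hcond [Hmono [Hbounds [_ Hmass]]].
  assert (Hpres : preserves_nonpos_tails 0 tb s).
  { apply nondecreasing_preserves_nonpos_tails; [lra | exact Hmono | apply Hbounds; lra]. }
  destruct (Hpres excess (ex_RInt_excess 0 tb)) as [Hex_int Hex_le].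
  destruct (Hpres fe (ex_RInt_fe 0 tb)) as [Hfe_int _].
  assert (Htails : forall m, 0 <= m <= tb -> RInt excess m tb <= 0).
  { intros m Hm. pose proof (Hcond m Hm). pose proof RInt_excess_total.
    pose proof (RInt_Chasles_R excess 0 m tb (ex_RInt_excess 0 m) (ex_RInt_excess m tb)). lra. }
  assert (Hmass_fe : RInt (fun t => s t * fe t) 0 tb = 1 / 2).
  { rewrite <- RInt_mult_density, Hmass, RInt_cdf_density, Fe_tb, Fe_0 by lra. real_eq. field. }
  rewrite W0_eq, W0_half.
  rewrite (RInt_ext _ (fun t => s t * excess t + E * (s t * fe t)))
    by (intros t _; unfold excess_density; real_eq; ring).
  rewrite RInt_plus_R, RInt_scal_R, Hmass_fe;
    [| exact Hfe_int | exact Hex_int | apply ex_RInt_scal_R, Hfe_int].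
  pose proof (Hex_le Htails). lra.
Qed.

End Allocation.

Theorem mainTheorem15 (tb : R) (F f : R -> R)
  (Htb : 0 < tb) (HF : cdf_with_density tb F f) :
  maximizes_W0 tb F f (fun _ => 1 / 2) <->
  (forall theta, 0 <= theta <= tb ->
     0 <= RInt (fun x => ((1 - F x) / f x - mean_theta tb f) * f x) 0 theta).
Proof.
  split.
  - intros [_ Hopt] theta Htheta.
    rewrite (condition_integrand_eq tb F f Htb HF theta Htheta).
    exact (half_optimal_implies_condition tb F f Htb HF theta Htheta Hopt).
  - intros Hcond. split; [exact (half_in_S0 tb F f Htb HF)|].
    intros s Hs. apply (condition_implies_half_optimal tb F f Htb HF s); [|exact Hs].
    intros theta Htheta. rewrite <- (condition_integrand_eq tb F f Htb HF theta Htheta).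
    exact (Hcond theta Htheta).
Qed.
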